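(* Let $\sigma>0$, $0\le\delta<\min(1,\sigma)$ and $0<a\le1$. For every integer $t>\tau:=\big(\frac{2(\sigma-\delta)}{a}\big)^{\frac{1}{1-\delta}}$, $$\sum_{s=1}^{t-1}\Big[\frac{1}{s^\sigma}\prod_{k=s+1}^{t-1}\Big(1-\frac{a}{k^\delta}\Big)\Big]\le A(a,\sigma,\delta)\,t^{-(\sigma-\delta)},$$ where $A(a,\sigma,\delta)=2^\sigma\max\{1+\frac2a,\,1+\frac{1}{\sigma-1}(\frac{2(\sigma-\delta)}{a})^{\frac{\sigma-\delta}{1-\delta}}\}$ if $\sigma>1$; $A(a,\sigma,\delta)=2^\sigma\max\{1+\frac2a,\,1+\frac2a\ln(\frac{2(1-\delta)}{a})\}$ if $\sigma=1$; $A(a,\sigma,\delta)=2^\sigma\max\{1+\frac2a,\,1+\frac{2(\sigma-\delta)}{a(1-\sigma)}\}$ if $0<\sigma<1$. Moreover, for $\delta=1$ and $a-\sigma+1\neq0$, $$\sum_{s=1}^{t-1}\Big[\frac{1}{s^\sigma}\prod_{k=s+1}^{t-1}\Big(1-\frac{a}{k}\Big)\Big]\le A(a,\sigma,1)\,t^{-\min(\sigma-1,a)},$$ where $A(a,\sigma,1)=2^\sigma\big(1+\frac{1}{|a-\sigma+1|}\big)$.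
   Context: Empty products equal $1$. In the case $\delta=1$ the same $a\in(0,1]$ and $\sigma>0$ are considered and $t$ ranges over positive integers. *)

From Stdlib Require Import Reals List.
Open Scope R_scope.

(* sum_{k=m}^{n} f k  (empty, i.e. 0, if n < m) *)
Definition sum_from_to (f : nat -> R) (m n : nat) : R :=
  fold_right Rplus 0 (map f (seq m (S n - m))).

(* prod_{k=m}^{n} f k  (empty, i.e. 1, if n < m) *)
Definition prod_from_to (f : nat -> R) (m n : nat) : R :=
  fold_right Rmult 1 (map f (seq m (S n - m))).

Definition Ssum (a sigma delta : R) (t : nat) : R :=
  sum_from_to
    (fun s => / Rpower (INR s) sigma *
       prod_from_to (fun k => 1 - a / Rpower (INR k) delta) (S s) (t - 1))
    1 (t - 1).

Definition Aconst (a sigma delta : R) : R :=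
  Rpower 2 sigma *
  Rmax (1 + 2 / a)
    (if Rlt_dec 1 sigma then
       1 + / (sigma - 1) * Rpower (2 * (sigma - delta) / a) ((sigma - delta) / (1 - delta))
     else if Req_EM_T sigma 1 then
       1 + 2 / a * ln (2 * (1 - delta) / a)
     else
       1 + 2 * (sigma - delta) / (a * (1 - sigma))).

Definition Aconst1 (a sigma : R) : R :=
  Rpower 2 sigma * (1 + / Rabs (a - sigma + 1)).

From Stdlib Require Import Reals Lra Lia List.
From Coquelicot Require Import Rcomplements.
Open Scope R_scope.

(* Write S_t for the sum: S_1 = 0 and S_(t+1) = (1 - a/t^delta) S_t + t^-sigma.
   For delta < min(1, sigma) and t > tau the contraction 1 - a/t^delta outweighs the
   relative decrease of t^-(sigma-delta) from t to t + 1, so S_t <= A t^-(sigma-delta)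
   propagates by induction.  It holds at the first integer t > tau because
   S_t <= sum_(s<t) s^-sigma, a power sum compared with the integral of x^-sigma, and
   t - 1 <= tau.  For delta = 1 the same recursion, with (1 - a/t) t^-a <= (t+1)^-a, gives
   S_t <= 2^sigma t^-a sum_(k=2..t) k^(a-sigma), again estimated by an integral. *)

(** * Inequalities for real powers *)

Lemma Rpower_pos x y : 0 < Rpower x y.
Proof. apply exp_pos. Qed.

Lemma Rpower_1_l y : Rpower 1 y = 1.
Proof. unfold Rpower. rewrite ln_1, Rmult_0_r. apply exp_0. Qed.

Lemma Rpower_ge1 x c : 1 <= x -> 0 <= c -> 1 <= Rpower x c.
Proof.
  intros Hx Hc. rewrite <- (Rpower_O x) by lra. now apply Rle_Rpower.
Qed.

Lemma Rpower_inv_pow x c : 0 < x -> c <> 0 -> Rpower (Rpower x (/ c)) c = x.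
Proof. intros Hx Hc. rewrite Rpower_mult, Rinv_l by exact Hc. now apply Rpower_1. Qed.

Lemma ln_1_plus_le y : -1 < y -> ln (1 + y) <= y.
Proof.
  intro Hy. apply Rnot_lt_le. intro Hlt. apply exp_increasing in Hlt.
  rewrite exp_ln in Hlt by lra. pose proof (exp_ineq1_le y). lra.
Qed.

Lemma exp_convex_comb_0 c u : 0 <= c <= 1 -> exp (c * u) <= c * exp u + (1 - c).
Proof.
  intros Hc.
  (* the tangent line of exp at c * u lies below exp at u and at 0 *)
  assert (Tangent : forall v, exp (c * u) * (1 + v - c * u) <= exp v).
  { intro v. replace v with (c * u + (v - c * u)) at 2 by ring.
    rewrite exp_plus. apply Rmult_le_compat_l; [left; apply exp_pos|].
    pose proof (exp_ineq1_le (v - c * u)). lra. }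
  pose proof (Tangent u) as Tu. pose proof (Tangent 0) as T0. rewrite exp_0 in T0.
  apply Rmult_le_compat_l with (r := c) in Tu; [|lra].
  apply Rmult_le_compat_l with (r := 1 - c) in T0; [|lra].
  replace (exp (c * u))
    with (c * (exp (c * u) * (1 + u - c * u)) + (1 - c) * (exp (c * u) * (1 + 0 - c * u)))
    by ring.
  lra.
Qed.

Lemma Rpower_bernoulli_nonpos c y : c <= 0 -> -1 < y -> 1 + c * y <= Rpower (1 + y) c.
Proof.
  intros Hc Hy. unfold Rpower.
  pose proof (exp_ineq1_le (c * ln (1 + y))).
  assert (c * y <= c * ln (1 + y))
    by (apply Rmult_le_compat_neg_l; [lra | now apply ln_1_plus_le]).
  lra.
Qed.

Lemma Rpower_bernoulli_concave c y : 0 <= c <= 1 -> -1 < y -> Rpower (1 + y) c <= 1 + c * y.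
Proof.
  intros Hc Hy. unfold Rpower.
  pose proof (exp_convex_comb_0 c (ln (1 + y)) Hc) as H.
  rewrite exp_ln in H by lra. lra.
Qed.

Lemma Rpower_bernoulli_ge1 c y : 1 <= c -> -1 < y -> 1 + c * y <= Rpower (1 + y) c.
Proof.
  intros Hc Hy.
  destruct (Rle_lt_dec (1 + c * y) 0) as [Hle | Hpos]; [pose proof (Rpower_pos (1 + y) c); lra|].
  (* apply the concave case with exponent 1/c to the base 1 + c y *)
  assert (Hinv : 0 <= / c <= 1).
  { split; [left; apply Rinv_0_lt_compat; lra | rewrite <- Rinv_1; apply Rinv_le_contravar; lra]. }
  pose proof (Rpower_bernoulli_concave (/ c) (c * y) Hinv ltac:(lra)) as B.
  replace (/ c * (c * y)) with y in B by (field; lra).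
  rewrite <- (Rpower_inv_pow (1 + c * y) c) by lra.
  apply Rle_Rpower_l; [lra | split; [apply Rpower_pos | exact B]].
Qed.

Lemma le_Rpower_three_halves s : 1 <= s -> s <= Rpower (3 / 2) s.
Proof.
  intro Hs. destruct (Rle_lt_dec s 2) as [Hs2 | Hs2].
  - pose proof (Rpower_bernoulli_ge1 s (1 / 2) Hs ltac:(lra)) as B.
    replace (1 + 1 / 2) with (3 / 2) in B by field. lra.
  - (* (3/2)^s = ((3/2)^(s/2))^2 >= (1 + s/4)^2 >= s *)
    pose proof (Rpower_bernoulli_ge1 (s / 2) (1 / 2) ltac:(lra) ltac:(lra)) as B.
    replace (1 + 1 / 2) with (3 / 2) in B by field.
    replace s with (s / 2 + s / 2) at 2 by field. rewrite Rpower_plus.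
    assert ((1 + s / 4) * (1 + s / 4) <= Rpower (3 / 2) (s / 2) * Rpower (3 / 2) (s / 2))
      by (apply Rmult_le_compat; lra).
    pose proof (Rle_0_sqr (s / 4 - 1)). unfold Rsqr in *. nra.
Qed.

Lemma Rpower_pred x c : 0 < x -> Rpower x (c - 1) = Rpower x c / x.
Proof.
  intro Hx. unfold Rminus. rewrite Rpower_plus, Rpower_Ropp, Rpower_1 by lra. reflexivity.
Qed.

Lemma Rpower_split_succ x c : 0 < x ->
  Rpower x c = Rpower (x + 1) c * Rpower (1 + - / (x + 1)) c.
Proof.
  intro Hx. rewrite Rpower_mult_distr.
  - f_equal. field. lra.
  - lra.
  - replace (1 + - / (x + 1)) with (x / (x + 1)) by (field; lra).
    apply Rdiv_lt_0_compat; lra.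
Qed.

Lemma Rpower_opp_succ_ge b x : 0 <= b -> 0 < x ->
  (1 - b / x) * Rpower x (- b) <= Rpower (x + 1) (- b).
Proof.
  intros Hb Hx.
  assert (Hinv : 0 < / x) by (apply Rinv_0_lt_compat; lra).
  replace (x + 1) with (x * (1 + / x)) by (field; lra).
  rewrite <- Rpower_mult_distr by lra.
  rewrite Rmult_comm. apply Rmult_le_compat_l; [left; apply Rpower_pos|].
  pose proof (Rpower_bernoulli_nonpos (- b) (/ x) ltac:(lra) ltac:(lra)).
  unfold Rdiv. lra.
Qed.

Lemma Rpower_succ_le_add1 c x : 0 <= c <= 1 -> 1 <= x ->
  Rpower (x + 1) c <= Rpower x c + 1.
Proof.
  intros Hc Hx.
  assert (Hinv : 0 < / x) by (apply Rinv_0_lt_compat; lra).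
  replace (x + 1) with (x * (1 + / x)) by (field; lra).
  rewrite <- Rpower_mult_distr by lra.
  pose proof (Rpower_bernoulli_concave c (/ x) Hc ltac:(lra)) as B.
  assert (Hcx : Rpower x c * / x <= 1).
  { rewrite <- (Rpower_1 x) at 2 by lra. rewrite <- Rpower_Ropp, <- Rpower_plus.
    rewrite <- (Rpower_O x) at 2 by lra. apply Rle_Rpower; lra. }
  apply Rle_trans with (Rpower x c * (1 + c * / x)).
  - apply Rmult_le_compat_l; [left; apply Rpower_pos | exact B].
  - assert (0 <= Rpower x c * / x) by (pose proof (Rpower_pos x c); nra).
    assert (c * (Rpower x c * / x) <= 1) by nra.
    nra.
Qed.

(* (x + 1)^e is at most the integral of t^e over [x, x + 1], t^e being decreasing. *)
Lemma Rpower_succ_le_diff e x : e < 0 -> e <> -1 -> 0 < x ->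
  Rpower (x + 1) e <= (Rpower (x + 1) (e + 1) - Rpower x (e + 1)) / (e + 1).
Proof.
  intros He He1 Hx.
  set (c := e + 1). set (P := Rpower (x + 1) c). set (Q := Rpower (x + 1) e).
  set (y := - / (x + 1)).
  assert (Hy : -1 < y < 0).
  { unfold y. assert (0 < / (x + 1) < 1) by
      (split; [apply Rinv_0_lt_compat | rewrite <- Rinv_1; apply Rinv_lt_contravar]; lra).
    lra. }
  assert (Split : Rpower x c = P * Rpower (1 + y) c) by (apply Rpower_split_succ; lra).
  assert (Linear : P * (1 + c * y) = P - c * Q).
  { unfold Q, P, y. replace e with (c - 1) by (unfold c; ring).
    rewrite Rpower_pred by lra. field. lra. }
  assert (HP : 0 < P) by apply Rpower_pos.
  destruct (Rlt_le_dec 0 c) as [Hc | Hc].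
  - pose proof (Rpower_bernoulli_concave c y ltac:(unfold c in *; lra) ltac:(lra)).
    assert (P * Rpower (1 + y) c <= P * (1 + c * y)) by (apply Rmult_le_compat_l; lra).
    rewrite <- Rle_div_r by lra. nra.
  - assert (Hc' : c < 0) by (unfold c in *; lra).
    pose proof (Rpower_bernoulli_nonpos c y Hc ltac:(lra)).
    assert (P * (1 + c * y) <= P * Rpower (1 + y) c) by (apply Rmult_le_compat_l; lra).
    replace ((P - Rpower x c) / c) with ((Rpower x c - P) / - c) by (field; lra).
    rewrite <- Rle_div_r by lra. nra.
Qed.

Lemma inv_succ_le_ln_diff x : 0 < x -> / (x + 1) <= ln (x + 1) - ln x.
Proof.
  intro Hx.
  assert (Hy : -1 < - / (x + 1)).
  { assert (/ (x + 1) < 1) by (rewrite <- Rinv_1; apply Rinv_lt_contravar; lra). lra. }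
  pose proof (ln_1_plus_le _ Hy) as L.
  replace (1 + - / (x + 1)) with (x / (x + 1)) in L by (field; lra).
  rewrite ln_div in L by lra. lra.
Qed.

Lemma le_mul_Rpower_opp x C y b : 0 < y -> x * Rpower y b <= C -> x <= C * Rpower y (- b).
Proof.
  intros Hy H. rewrite Rpower_Ropp. change (C * / Rpower y b) with (C / Rpower y b).
  rewrite <- Rle_div_r by apply Rpower_pos. exact H.
Qed.

(** * Finite sums and the recursion for Ssum *)

Lemma fold_right_Rplus_app (l1 l2 : list R) :
  fold_right Rplus 0 (l1 ++ l2) = fold_right Rplus 0 l1 + fold_right Rplus 0 l2.
Proof. induction l1 as [|x l1 IH]; simpl; [ring | rewrite IH; ring]. Qed.

Lemma fold_right_Rmult_app (l1 l2 : list R) :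
  fold_right Rmult 1 (l1 ++ l2) = fold_right Rmult 1 l1 * fold_right Rmult 1 l2.
Proof. induction l1 as [|x l1 IH]; simpl; [ring | rewrite IH; ring]. Qed.

Lemma sum_from_to_succ f m n : (m <= S n)%nat ->
  sum_from_to f m (S n) = sum_from_to f m n + f (S n).
Proof.
  intro Hmn. unfold sum_from_to.
  replace (S (S n) - m)%nat with (S (S n - m)) by lia.
  rewrite seq_S, map_app, fold_right_Rplus_app.
  replace (m + (S n - m))%nat with (S n) by lia. simpl. ring.
Qed.

Lemma prod_from_to_succ f m n : (m <= S n)%nat ->
  prod_from_to f m (S n) = prod_from_to f m n * f (S n).
Proof.
  intro Hmn. unfold prod_from_to.
  replace (S (S n) - m)%nat with (S (S n - m)) by lia.
  rewrite seq_S, map_app, fold_right_Rmult_app.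
  replace (m + (S n - m))%nat with (S n) by lia. simpl. ring.
Qed.

Lemma prod_from_to_empty f m n : (n < m)%nat -> prod_from_to f m n = 1.
Proof. intro Hnm. unfold prod_from_to. now replace (S n - m)%nat with O by lia. Qed.

Lemma sum_from_to_scal c f g m n :
  (forall k, (m <= k <= n)%nat -> g k = c * f k) ->
  sum_from_to g m n = c * sum_from_to f m n.
Proof.
  intro Hfg. unfold sum_from_to.
  assert (Hl : forall l, (forall k, In k l -> g k = c * f k) ->
            fold_right Rplus 0 (map g l) = c * fold_right Rplus 0 (map f l)).
  { induction l as [|k l IH]; intro Hl; simpl; [ring|].
    rewrite (Hl k) by (simpl; auto).
    rewrite IH by (intros; apply Hl; simpl; auto). ring. }
  apply Hl. intros k Hk. apply in_seq in Hk. apply Hfg. lia.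
Qed.

Lemma Ssum_1 a s d : Ssum a s d 1 = 0.
Proof. reflexivity. Qed.

Lemma Ssum_succ a s d n :
  Ssum a s d (S (S n)) =
  (1 - a / Rpower (INR (S n)) d) * Ssum a s d (S n) + / Rpower (INR (S n)) s.
Proof.
  unfold Ssum.
  replace (S (S n) - 1)%nat with (S n) by lia. replace (S n - 1)%nat with n by lia.
  rewrite sum_from_to_succ, prod_from_to_empty by lia.
  f_equal; [|ring].
  apply sum_from_to_scal. intros k Hk.
  rewrite prod_from_to_succ by lia. ring.
Qed.

Lemma decay_factor_bounds a d T : 0 <= d -> 0 < a <= 1 -> 1 <= T ->
  0 <= 1 - a / Rpower T d <= 1.
Proof.
  intros Hd Ha HT. pose proof (Rpower_ge1 T d HT Hd).
  assert (0 < a / Rpower T d) by (apply Rdiv_lt_0_compat; lra).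
  assert (a / Rpower T d <= 1) by (rewrite <- Rdiv_le_1 by lra; lra).
  lra.
Qed.

(** * Power sums *)

Lemma INR_S_ge1 n : 1 <= INR (S n).
Proof. apply (le_INR 1). lia. Qed.

Definition power_sum (e : R) (n : nat) : R := sum_from_to (fun k => Rpower (INR k) e) 1 n.

Lemma power_sum_1 e : power_sum e 1 = 1.
Proof. unfold power_sum, sum_from_to. simpl. rewrite Rpower_1_l. ring. Qed.

Lemma power_sum_succ e n : power_sum e (S n) = power_sum e n + Rpower (INR (S n)) e.
Proof. apply sum_from_to_succ. lia. Qed.

Lemma power_sum_ge1 e n : 1 <= power_sum e (S n).
Proof.
  induction n as [|n IH]; [rewrite power_sum_1; lra|].
  rewrite power_sum_succ. pose proof (Rpower_pos (INR (S (S n))) e). lra.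
Qed.

Lemma power_sum_le_nonneg e n : 0 <= e -> power_sum e (S n) <= Rpower (INR (S n)) (e + 1).
Proof.
  intro He. induction n as [|n IH].
  - rewrite power_sum_1. simpl INR. rewrite Rpower_1_l. lra.
  - rewrite power_sum_succ, (S_INR (S n)). set (T := INR (S n)) in *.
    assert (HT : 1 <= T) by apply INR_S_ge1.
    rewrite Rpower_plus, Rpower_1 in * by lra.
    assert (Rpower T e <= Rpower (T + 1) e) by (apply Rle_Rpower_l; lra).
    nra.
Qed.

Lemma power_sum_le_integral e n : e < 0 -> e <> -1 ->
  power_sum e (S n) <= 1 + (Rpower (INR (S n)) (e + 1) - 1) / (e + 1).
Proof.
  intros He He1. induction n as [|n IH].
  - rewrite power_sum_1. simpl INR. rewrite Rpower_1_l.
    replace ((1 - 1) / (e + 1)) with 0 by (field; lra). lra.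
  - rewrite power_sum_succ, (S_INR (S n)). set (T := INR (S n)) in *.
    assert (HT : 1 <= T) by apply INR_S_ge1.
    pose proof (Rpower_succ_le_diff e T He He1 ltac:(lra)).
    replace ((Rpower (T + 1) (e + 1) - 1) / (e + 1))
      with ((Rpower T (e + 1) - 1) / (e + 1)
            + (Rpower (T + 1) (e + 1) - Rpower T (e + 1)) / (e + 1)) by (field; lra).
    lra.
Qed.

Lemma power_sum_harmonic_le n : power_sum (- (1)) (S n) <= 1 + ln (INR (S n)).
Proof.
  induction n as [|n IH].
  - rewrite power_sum_1. simpl INR. rewrite ln_1. lra.
  - rewrite power_sum_succ, (S_INR (S n)). set (T := INR (S n)) in *.
    assert (HT : 1 <= T) by apply INR_S_ge1.
    rewrite Rpower_Ropp, Rpower_1 by lra.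
    pose proof (inv_succ_le_ln_diff T ltac:(lra)). lra.
Qed.

Lemma Ssum_nonneg_le_power_sum a s d n : 0 <= d -> 0 < a <= 1 ->
  0 <= Ssum a s d (S n) <= power_sum (- s) n.
Proof.
  intros Hd Ha. induction n as [|n IH].
  - rewrite Ssum_1. unfold power_sum, sum_from_to. simpl. lra.
  - rewrite Ssum_succ, power_sum_succ, Rpower_Ropp.
    set (w := 1 - a / Rpower (INR (S n)) d).
    assert (Hw : 0 <= w <= 1) by apply (decay_factor_bounds a d _ Hd Ha (INR_S_ge1 n)).
    pose proof (Rinv_0_lt_compat _ (Rpower_pos (INR (S n)) s)).
    assert (0 <= w * Ssum a s d (S n) <= 1 * Ssum a s d (S n))
      by (split; [apply Rmult_le_pos | apply Rmult_le_compat_r]; lra).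
    lra.
Qed.

(** * The case delta < min(1, sigma) *)

(* Multiplying A T^-(s-d) by 1 - a/T^d removes a A T^-s >= 2 T^-s, which pays for the
   added T^-s and for A T^-(s-d) - A (T+1)^-(s-d) <= A (s-d) T^-(s-d+1) <= (a A / 2) T^-s. *)
Lemma decay_step a s d A T u :
  0 <= d -> d < s -> 0 < a <= 1 -> 2 / a <= A -> 1 <= T ->
  2 * (s - d) / a <= Rpower T (1 - d) ->
  u <= A * Rpower T (- (s - d)) ->
  (1 - a / Rpower T d) * u + / Rpower T s <= A * Rpower (T + 1) (- (s - d)).
Proof.
  intros Hd Hds Ha HA HT Hthr Hu.
  set (b := s - d) in *. set (U := Rpower T d). set (V := / Rpower T s).
  assert (HU : 0 < U) by apply Rpower_pos.
  assert (HV : 0 < V) by (apply Rinv_0_lt_compat, Rpower_pos).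
  assert (HaA : 2 <= a * A).
  { apply Rmult_le_compat_l with (r := a) in HA; [|lra].
    replace (a * (2 / a)) with 2 in HA by (field; lra). exact HA. }
  assert (HA0 : 0 < A) by nra.
  assert (EW : Rpower T (- b) = U * V).
  { unfold U, V, b. rewrite <- Rpower_Ropp, <- Rpower_plus. f_equal. ring. }
  assert (Hratio : b * U / T <= a / 2).
  { assert (ET : Rpower T (1 - d) = T / U).
    { unfold U, Rminus. rewrite Rpower_plus, Rpower_Ropp, Rpower_1 by lra. reflexivity. }
    rewrite ET in Hthr.
    apply Rmult_le_compat_r with (r := a * U) in Hthr; [|nra].
    replace (2 * b / a * (a * U)) with (2 * b * U) in Hthr by (field; lra).
    replace (T / U * (a * U)) with (a * T) in Hthr by (field; lra).
    rewrite Rle_div_l by lra. lra. }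
  pose proof (decay_factor_bounds a d T Hd Ha HT) as [Hw _]. fold U in Hw.
  pose proof (Rpower_opp_succ_ge b T ltac:(unfold b; lra) ltac:(lra)) as Hgrowth.
  rewrite EW in Hu, Hgrowth.
  assert ((1 - a / U) * u <= (1 - a / U) * (A * (U * V))) by (apply Rmult_le_compat_l; lra).
  assert (A * ((1 - b / T) * (U * V)) <= A * Rpower (T + 1) (- b))
    by (apply Rmult_le_compat_l; lra).
  assert ((1 - a / U) * (A * (U * V)) = A * U * V - a * A * V) by (field; lra).
  assert (A * ((1 - b / T) * (U * V)) = A * U * V - A * V * (b * U / T)) by (field; lra).
  assert (A * V * (b * U / T) <= A * V * (a / 2)) by (apply Rmult_le_compat_l; nra).
  assert (V * 1 <= V * (a * A / 2)) by (apply Rmult_le_compat_l; lra).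
  lra.
Qed.

Lemma Ssum_decay_step a s d A n :
  0 <= d -> d < s -> 0 < a <= 1 -> 2 / a <= A ->
  2 * (s - d) / a <= Rpower (INR (S n)) (1 - d) ->
  Ssum a s d (S n) <= A * Rpower (INR (S n)) (- (s - d)) ->
  Ssum a s d (S (S n)) <= A * Rpower (INR (S (S n))) (- (s - d)).
Proof.
  intros. rewrite Ssum_succ, (S_INR (S n)).
  apply decay_step; auto using INR_S_ge1.
Qed.

Lemma Aconst_ge_l a s d : Rpower 2 s * (1 + 2 / a) <= Aconst a s d.
Proof.
  unfold Aconst. apply Rmult_le_compat_l; [left; apply Rpower_pos | apply Rmax_l].
Qed.

Lemma Aconst_lt1 a s d : s < 1 ->
  Rpower 2 s * (1 + 2 * (s - d) / (a * (1 - s))) <= Aconst a s d.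
Proof.
  intro Hs. unfold Aconst.
  destruct (Rlt_dec 1 s); [lra|]. destruct (Req_EM_T s 1); [lra|].
  apply Rmult_le_compat_l; [left; apply Rpower_pos | apply Rmax_r].
Qed.

Lemma Aconst_eq1 a d :
  Aconst a 1 d = 2 * Rmax (1 + 2 / a) (1 + 2 / a * ln (2 * (1 - d) / a)).
Proof.
  unfold Aconst. destruct (Rlt_dec 1 1); [lra|]. destruct (Req_EM_T 1 1); [|lra].
  rewrite Rpower_1 by lra. reflexivity.
Qed.

Lemma Aconst_gt1 a s d : 1 < s ->
  Rpower 2 s * (1 + / (s - 1) * Rpower (2 * (s - d) / a) ((s - d) / (1 - d)))
  <= Aconst a s d.
Proof.
  intro Hs. unfold Aconst. destruct (Rlt_dec 1 s); [|lra].
  apply Rmult_le_compat_l; [left; apply Rpower_pos | apply Rmax_r].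
Qed.

Lemma power_sum_opp_le s n : 1 < s -> power_sum (- s) (S n) <= s / (s - 1).
Proof.
  intro Hs.
  pose proof (power_sum_le_integral (- s) n ltac:(lra) ltac:(lra)) as H.
  set (P := Rpower (INR (S n)) (- s + 1)) in H.
  assert (HP : 0 < P) by apply Rpower_pos.
  replace ((P - 1) / (- s + 1)) with ((1 - P) / (s - 1)) in H by (field; lra).
  assert ((1 - P) / (s - 1) <= 1 / (s - 1))
    by (unfold Rdiv; apply Rmult_le_compat_r; [left; apply Rinv_0_lt_compat |]; lra).
  replace (s / (s - 1)) with (1 + 1 / (s - 1)) by (field; lra).
  lra.
Qed.

Lemma power_sum_le_Aconst_lt1 a s d n : 0 < s < 1 -> 0 <= d < s -> 0 < a <= 1 ->
  Rpower (INR (S n)) (1 - d) <= 2 * (s - d) / a ->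
  power_sum (- s) (S n) <= Aconst a s d * Rpower (INR (S n) + 1) (- (s - d)).
Proof.
  intros Hs Hd Ha Hthr.
  set (N := INR (S n)) in *. assert (HN : 1 <= N) by apply INR_S_ge1.
  apply le_mul_Rpower_opp; [lra|].
  assert (Hsum : power_sum (- s) (S n) <= Rpower N (1 - s) / (1 - s)).
  { pose proof (power_sum_le_integral (- s) n ltac:(lra) ltac:(lra)) as H.
    replace (- s + 1) with (1 - s) in H by ring. fold N in H.
    replace (Rpower N (1 - s) / (1 - s)) with (1 + (Rpower N (1 - s) - 1) / (1 - s)
      + s / (1 - s)) by (field; lra).
    assert (0 <= s / (1 - s)) by (apply Rdiv_le_0_compat; lra).
    unfold Rdiv in *. lra. }
  assert (Hgrowth : Rpower (N + 1) (s - d) <= Rpower 2 s * Rpower N (s - d)).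
  { apply Rle_trans with (Rpower 2 (s - d) * Rpower N (s - d)).
    - rewrite Rpower_mult_distr by lra. apply Rle_Rpower_l; lra.
    - apply Rmult_le_compat_r; [left; apply Rpower_pos | apply Rle_Rpower; lra]. }
  assert (Hexp : Rpower N (1 - s) * Rpower N (s - d) = Rpower N (1 - d))
    by (rewrite <- Rpower_plus; f_equal; ring).
  eapply Rle_trans.
  { apply Rmult_le_compat; [| left; apply Rpower_pos | exact Hsum | exact Hgrowth].
    apply Rle_trans with 1; [lra | apply power_sum_ge1]. }
  eapply Rle_trans; [|apply Aconst_lt1; lra].
  replace (Rpower N (1 - s) / (1 - s) * (Rpower 2 s * Rpower N (s - d)))
    with (Rpower 2 s * (Rpower N (1 - d) / (1 - s))) by (rewrite <- Hexp; field; lra).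
  apply Rmult_le_compat_l; [left; apply Rpower_pos|].
  replace (2 * (s - d) / (a * (1 - s))) with (2 * (s - d) / a / (1 - s)) by (field; lra).
  assert (Rpower N (1 - d) / (1 - s) <= 2 * (s - d) / a / (1 - s))
    by (unfold Rdiv; apply Rmult_le_compat_r; [left; apply Rinv_0_lt_compat; lra | exact Hthr]).
  lra.
Qed.

Lemma power_sum_le_Aconst_eq1 a d n : 0 <= d < 1 -> 0 < a <= 1 ->
  Rpower (INR (S n)) (1 - d) <= 2 * (1 - d) / a ->
  power_sum (- (1)) (S n) <= Aconst a 1 d * Rpower (INR (S n) + 1) (- (1 - d)).
Proof.
  intros Hd Ha Hthr.
  pose proof (power_sum_harmonic_le n) as Hsum.
  set (N := INR (S n)) in *. assert (HN : 1 <= N) by apply INR_S_ge1.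
  set (X := 2 * (1 - d) / a) in *. set (m := Rpower N (1 - d)) in *. set (L := ln N) in *.
  apply le_mul_Rpower_opp; [lra|].
  rewrite Aconst_eq1. fold X.
  set (M := Rmax (1 + 2 / a) (1 + 2 / a * ln X)).
  assert (Hm1 : 1 <= m) by (apply Rpower_ge1; lra).
  assert (HL : 0 <= L) by (rewrite <- ln_1; apply ln_le; lra).
  assert (HXa : X <= 2 / a)
    by (unfold X, Rdiv; apply Rmult_le_compat_r; [left; apply Rinv_0_lt_compat |]; lra).
  assert (Hsub : Rpower (N + 1) (1 - d) <= m + 1) by (apply Rpower_succ_le_add1; lra).
  (* m L = (m ln m) / (1 - d), and x ln x is increasing on [1, oo) *)
  assert (HmL : m * L <= 2 / a * ln X).
  { assert (Eln : ln m = (1 - d) * L) by apply ln_Rpower.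
    assert (0 <= ln m) by (rewrite <- ln_1; apply ln_le; lra).
    assert (ln m <= ln X) by (apply ln_le; lra).
    assert (m * ln m <= X * ln X) by (apply Rmult_le_compat; lra).
    replace (m * L) with (m * ln m / (1 - d)) by (rewrite Eln; field; lra).
    replace (2 / a * ln X) with (X * ln X / (1 - d)) by (unfold X; field; lra).
    unfold Rdiv. apply Rmult_le_compat_r; [left; apply Rinv_0_lt_compat; lra | lra]. }
  assert (HM1 : 1 + 2 / a <= M) by apply Rmax_l.
  assert (HM2 : 1 + 2 / a * ln X <= M) by apply Rmax_r.
  assert (Hprod : (1 + L) * (m + 1) <= 2 * M).
  { destruct (Rle_lt_dec L 1).
    - assert ((1 + L) * (m + 1) <= 2 * (m + 1)) by (apply Rmult_le_compat_r; lra). lra.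
    - assert (0 <= (m - 1) * (L - 1)) by (apply Rmult_le_pos; lra). nra. }
  apply Rle_trans with ((1 + L) * (m + 1)); [|exact Hprod].
  apply Rmult_le_compat; try lra.
  - apply Rle_trans with 1; [lra | apply power_sum_ge1].
  - left. apply Rpower_pos.
Qed.

(* The hypothesis on s is only used for n = 1. *)
Lemma power_sum_opp_mul_succ_le s n : 1 < s -> 2 * s < INR (S n) + 3 ->
  power_sum (- s) (S n) * Rpower (INR (S n) + 1) s
  <= Rpower 2 s * (1 + Rpower (INR (S n)) s / (s - 1)).
Proof.
  intros Hs Hsn.
  assert (Hinv : 0 < / (s - 1)) by (apply Rinv_0_lt_compat; lra).
  pose proof (Rpower_pos 2 s) as P2.
  destruct n as [|[|n]].
  - rewrite power_sum_1. simpl INR. rewrite Rpower_1_l.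
    replace (1 + 1) with 2 by ring. unfold Rdiv.
    assert (0 <= Rpower 2 s * (1 * / (s - 1))) by (apply Rmult_le_pos; lra). lra.
  - rewrite power_sum_succ, power_sum_1, Rpower_Ropp.
    change (INR 2) with 2 in *. replace (2 + 1) with 3 by ring.
    assert (E4 : Rpower 2 s * Rpower 2 s = Rpower 4 s)
      by (rewrite Rpower_mult_distr by lra; f_equal; ring).
    assert (E43 : Rpower 3 s * Rpower (4 / 3) s = Rpower 4 s)
      by (rewrite Rpower_mult_distr by lra; f_equal; field).
    assert (H32 : / Rpower 2 s * Rpower 3 s <= Rpower 2 s).
    { rewrite Rmult_comm. change (Rpower 3 s * / Rpower 2 s) with (Rpower 3 s / Rpower 2 s).
      rewrite Rle_div_l, E4 by lra. apply Rle_Rpower_l; lra. }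
    (* (4/3)^s >= 1 + s/3 >= s - 1 because s <= 3 *)
    assert (Hb : s - 1 <= Rpower (4 / 3) s).
    { pose proof (Rpower_bernoulli_ge1 s (1 / 3) ltac:(lra) ltac:(lra)) as B.
      replace (1 + 1 / 3) with (4 / 3) in B by field. lra. }
    assert (H3 : Rpower 3 s <= Rpower 4 s / (s - 1)).
    { rewrite <- Rle_div_r, <- E43 by lra.
      apply Rmult_le_compat_l; [left; apply Rpower_pos | exact Hb]. }
    replace (Rpower 2 s * (1 + Rpower 2 s / (s - 1))) with (Rpower 2 s + Rpower 4 s / (s - 1))
      by (rewrite <- E4; field; lra).
    lra.
  - set (N := INR (S (S (S n)))) in *.
    assert (HN : 3 <= N) by (unfold N; rewrite !S_INR; pose proof (pos_INR n); lra).
    assert (Hq : s <= Rpower (2 * N / (N + 1)) s).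
    { apply Rle_trans with (Rpower (3 / 2) s); [apply le_Rpower_three_halves; lra|].
      apply Rle_Rpower_l; [lra|]. split; [lra|].
      rewrite <- Rle_div_r by lra. lra. }
    assert (E : Rpower (2 * N / (N + 1)) s * Rpower (N + 1) s = Rpower 2 s * Rpower N s).
    { rewrite !Rpower_mult_distr by (try apply Rdiv_lt_0_compat; lra). f_equal. field. lra. }
    apply Rle_trans with (s / (s - 1) * Rpower (N + 1) s).
    { apply Rmult_le_compat_r; [left; apply Rpower_pos | apply power_sum_opp_le; lra]. }
    apply Rle_trans with (Rpower 2 s * (Rpower N s / (s - 1))).
    { replace (Rpower 2 s * (Rpower N s / (s - 1)))
        with (Rpower (2 * N / (N + 1)) s * Rpower (N + 1) s / (s - 1)) by (rewrite E; field; lra).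
      unfold Rdiv. rewrite !(Rmult_comm _ (/ (s - 1))), <- !Rmult_assoc.
      apply Rmult_le_compat_r; [left; apply Rpower_pos|].
      rewrite !(Rmult_comm (/ (s - 1))). apply Rmult_le_compat_r; lra. }
    apply Rmult_le_compat_l; lra.
Qed.

Lemma power_sum_le_Aconst_gt1 a s d n : 1 < s -> 0 <= d < 1 -> 0 < a <= 1 ->
  Rpower (INR (S n)) (1 - d) <= 2 * (s - d) / a -> 2 * s < INR (S n) + 3 ->
  power_sum (- s) (S n) <= Aconst a s d * Rpower (INR (S n) + 1) (- (s - d)).
Proof.
  intros Hs Hd Ha Hthr Hsn.
  pose proof (power_sum_opp_mul_succ_le s n Hs Hsn) as K.
  set (N := INR (S n)) in *. assert (HN : 1 <= N) by apply INR_S_ge1.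
  set (P := power_sum (- s) (S n)) in *.
  assert (HP : 0 <= P) by (apply Rle_trans with 1; [lra | apply power_sum_ge1]).
  set (b := s - d).
  assert (Hsplit : forall x, 0 < x -> Rpower x s = Rpower x b * Rpower x d)
    by (intros; rewrite <- Rpower_plus; f_equal; unfold b; ring).
  assert (Hd1 : 1 <= Rpower (N + 1) d) by (apply Rpower_ge1; lra).
  assert (HdN : Rpower N d <= Rpower (N + 1) d) by (apply Rle_Rpower_l; lra).
  assert (Hinv : 0 < / (s - 1)) by (apply Rinv_0_lt_compat; lra).
  pose proof (Rpower_pos 2 s). pose proof (Rpower_pos N b).
  assert (Kb : P * Rpower (N + 1) b <= Rpower 2 s * (1 + Rpower N b / (s - 1))).
  { apply Rmult_le_reg_r with (Rpower (N + 1) d); [apply Rpower_pos|].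
    rewrite Rmult_assoc, <- Hsplit by lra. eapply Rle_trans; [exact K|].
    rewrite (Hsplit N) by lra. unfold Rdiv.
    assert (Rpower 2 s * (Rpower N b * / (s - 1)) * Rpower N d
            <= Rpower 2 s * (Rpower N b * / (s - 1)) * Rpower (N + 1) d)
      by (apply Rmult_le_compat_l; [apply Rmult_le_pos; [|apply Rmult_le_pos] |]; lra).
    nra. }
  assert (HY : Rpower N b <= Rpower (2 * (s - d) / a) ((s - d) / (1 - d))).
  { replace (Rpower N b) with (Rpower (Rpower N (1 - d)) ((s - d) / (1 - d)))
      by (rewrite Rpower_mult; f_equal; unfold b; field; lra).
    apply Rle_Rpower_l; [apply Rdiv_le_0_compat; lra | split; [apply Rpower_pos | exact Hthr]]. }
  apply le_mul_Rpower_opp; [lra|].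
  eapply Rle_trans; [exact Kb|]. eapply Rle_trans; [|apply Aconst_gt1; lra].
  apply Rmult_le_compat_l; [lra|]. unfold Rdiv.
  rewrite (Rmult_comm (Rpower N b)). apply Rplus_le_compat_l, Rmult_le_compat_l; lra.
Qed.

Lemma power_sum_le_Aconst a s d n :
  0 < s -> 0 <= d -> d < Rmin 1 s -> 0 < a <= 1 ->
  INR (S n) <= Rpower (2 * (s - d) / a) (1 / (1 - d)) < INR (S n) + 1 ->
  power_sum (- s) (S n) <= Aconst a s d * Rpower (INR (S n) + 1) (- (s - d)).
Proof.
  intros Hs Hd Hdm Ha [Hlo Hhi].
  assert (Hd1 : d < 1) by (pose proof (Rmin_l 1 s); lra).
  assert (Hds : d < s) by (pose proof (Rmin_r 1 s); lra).
  set (X := 2 * (s - d) / a) in *. set (tau := Rpower X (1 / (1 - d))) in *.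
  assert (HX : 0 < X) by (apply Rdiv_lt_0_compat; lra).
  assert (Etau : Rpower tau (1 - d) = X)
    by (unfold tau; rewrite Rdiv_1_l; apply Rpower_inv_pow; lra).
  assert (HN : 1 <= INR (S n)) by apply INR_S_ge1.
  assert (Hthr : Rpower (INR (S n)) (1 - d) <= X)
    by (rewrite <- Etau; apply Rle_Rpower_l; lra).
  destruct (total_order_T s 1) as [[Hlt | ->] | Hgt].
  - apply power_sum_le_Aconst_lt1; auto; lra.
  - apply power_sum_le_Aconst_eq1; auto; lra.
  - apply power_sum_le_Aconst_gt1; auto; try lra.
    (* 2 (s - d) <= X = tau^(1-d) <= tau < N + 1 *)
    assert (X <= tau).
    { rewrite <- Etau. rewrite <- (Rpower_1 tau) at 2 by lra. apply Rle_Rpower; lra. }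
    assert (2 * (s - d) <= X).
    { unfold X. rewrite <- Rle_div_r by lra. nra. }
    lra.
Qed.

Lemma Ssum_le_Aconst a s d t :
  0 < s -> 0 <= d -> d < Rmin 1 s -> 0 < a -> a <= 1 ->
  Rpower (2 * (s - d) / a) (1 / (1 - d)) < INR t ->
  Ssum a s d t <= Aconst a s d * Rpower (INR t) (- (s - d)).
Proof.
  intros Hs Hd Hdm Ha Ha1.
  assert (Hd1 : d < 1) by (pose proof (Rmin_l 1 s); lra).
  assert (Hds : d < s) by (pose proof (Rmin_r 1 s); lra).
  set (X := 2 * (s - d) / a). set (tau := Rpower X (1 / (1 - d))).
  assert (HX : 0 < X) by (apply Rdiv_lt_0_compat; lra).
  assert (Etau : Rpower tau (1 - d) = X)
    by (unfold tau; rewrite Rdiv_1_l; apply Rpower_inv_pow; lra).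
  assert (Ha2 : 0 < 2 / a) by (apply Rdiv_lt_0_compat; lra).
  assert (HA : 2 / a <= Aconst a s d).
  { pose proof (Aconst_ge_l a s d). pose proof (Rpower_ge1 2 s ltac:(lra) ltac:(lra)).
    assert (1 * (1 + 2 / a) <= Rpower 2 s * (1 + 2 / a)) by (apply Rmult_le_compat_r; lra).
    lra. }
  induction t as [|[|m] IH]; intro Ht.
  - assert (0 < tau) by apply Rpower_pos. simpl in Ht. lra.
  - rewrite Ssum_1. pose proof (Rpower_pos (INR 1) (- (s - d))).
    apply Rmult_le_pos; lra.
  - destruct (Rlt_le_dec tau (INR (S m))) as [Hlt | Hge].
    + apply Ssum_decay_step; [lra | lra | lra | exact HA | | exact (IH Hlt)].
      fold X. rewrite <- Etau. left. apply Rlt_Rpower_l; [lra|].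
      split; [apply Rpower_pos | exact Hlt].
    + eapply Rle_trans; [apply (Ssum_nonneg_le_power_sum a s d (S m)); lra|].
      rewrite (S_INR (S m)) in *. apply power_sum_le_Aconst; auto; lra.
Qed.

(** * The case delta = 1 *)

Lemma Ssum_delta1_le a s n : 0 < s -> 0 < a <= 1 ->
  Ssum a s 1 (S n) <= Rpower 2 s * Rpower (INR (S n)) (- a) * (power_sum (a - s) (S n) - 1).
Proof.
  intros Hs Ha. induction n as [|n IH].
  - rewrite Ssum_1, power_sum_1. lra.
  - rewrite Ssum_succ, power_sum_succ, (S_INR (S n)).
    set (T := INR (S n)) in *. assert (HT : 1 <= T) by apply INR_S_ge1.
    rewrite Rpower_1 by lra.
    set (K := power_sum (a - s) (S n) - 1) in *.
    assert (HK : 0 <= K) by (pose proof (power_sum_ge1 (a - s) n); unfold K; lra).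
    pose proof (Rpower_pos 2 s) as P2.
    assert (Hw : 0 <= 1 - a / T) by (rewrite <- (Rpower_1 T) by lra; apply decay_factor_bounds; lra).
    assert (Hold : (1 - a / T) * Ssum a s 1 (S n) <= Rpower 2 s * Rpower (T + 1) (- a) * K).
    { eapply Rle_trans; [apply Rmult_le_compat_l; [exact Hw | exact IH]|].
      pose proof (Rpower_opp_succ_ge a T ltac:(lra) ltac:(lra)) as G.
      replace ((1 - a / T) * (Rpower 2 s * Rpower T (- a) * K))
        with (Rpower 2 s * K * ((1 - a / T) * Rpower T (- a))) by ring.
      replace (Rpower 2 s * Rpower (T + 1) (- a) * K)
        with (Rpower 2 s * K * Rpower (T + 1) (- a)) by ring.
      apply Rmult_le_compat_l; [apply Rmult_le_pos|]; lra. }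
    assert (Hnew : / Rpower T s <= Rpower 2 s * Rpower (T + 1) (- a) * Rpower (T + 1) (a - s)).
    { rewrite Rmult_assoc, <- Rpower_plus. replace (- a + (a - s)) with (- s) by ring.
      rewrite Rpower_Ropp.
      assert (HTs : 0 < Rpower T s) by apply Rpower_pos.
      assert (HT1s : 0 < Rpower (T + 1) s) by apply Rpower_pos.
      assert (Rpower (T + 1) s <= Rpower 2 s * Rpower T s)
        by (rewrite Rpower_mult_distr by lra; apply Rle_Rpower_l; lra).
      apply Rmult_le_reg_r with (Rpower T s * Rpower (T + 1) s); [nra|].
      replace (/ Rpower T s * (Rpower T s * Rpower (T + 1) s)) with (Rpower (T + 1) s)
        by (field; lra).
      replace (Rpower 2 s * / Rpower (T + 1) s * (Rpower T s * Rpower (T + 1) s))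
        with (Rpower 2 s * Rpower T s) by (field; lra).
      lra. }
    replace (power_sum (a - s) (S n) + Rpower (T + 1) (a - s) - 1)
      with (K + Rpower (T + 1) (a - s)) by (unfold K; ring).
    rewrite Rmult_plus_distr_l. lra.
Qed.

Lemma power_sum_sub1_le_pow e n : -1 < e ->
  power_sum e (S n) - 1 <= (1 + / (e + 1)) * Rpower (INR (S n)) (e + 1).
Proof.
  intro He.
  assert (Hinv : 0 < / (e + 1)) by (apply Rinv_0_lt_compat; lra).
  pose proof (Rpower_pos (INR (S n)) (e + 1)) as HP.
  destruct (Rle_lt_dec 0 e) as [Hpos | Hneg].
  - pose proof (power_sum_le_nonneg e n Hpos). nra.
  - pose proof (power_sum_le_integral e n Hneg ltac:(lra)) as H.
    unfold Rdiv in H. nra.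
Qed.

Lemma power_sum_sub1_le_const e n : e < -1 -> power_sum e (S n) - 1 <= / - (e + 1).
Proof.
  intro He.
  pose proof (power_sum_le_integral e n ltac:(lra) ltac:(lra)) as H.
  pose proof (Rpower_pos (INR (S n)) (e + 1)).
  replace ((Rpower (INR (S n)) (e + 1) - 1) / (e + 1))
    with (/ - (e + 1) - Rpower (INR (S n)) (e + 1) / - (e + 1)) in H by (field; lra).
  assert (0 <= Rpower (INR (S n)) (e + 1) / - (e + 1)) by (apply Rdiv_le_0_compat; lra).
  lra.
Qed.

Lemma Ssum_delta1_le_Aconst1 a s t :
  0 < s -> 0 < a -> a <= 1 -> a - s + 1 <> 0 -> (1 <= t)%nat ->
  Ssum a s 1 t <= Aconst1 a s * Rpower (INR t) (- Rmin (s - 1) a).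
Proof.
  intros Hs Ha Ha1 Hne Ht.
  destruct t as [|n]; [lia|].
  pose proof (Ssum_delta1_le a s n Hs (conj Ha Ha1)) as H.
  set (N := INR (S n)) in *. unfold Aconst1.
  pose proof (Rpower_pos 2 s). pose proof (Rpower_pos N (- a)).
  destruct (Rle_lt_dec 0 (a - s + 1)) as [Hgt | Hlt].
  - assert (Hgt' : 0 < a - s + 1) by lra.
    rewrite Rmin_left, Rabs_pos_eq by lra.
    pose proof (power_sum_sub1_le_pow (a - s) n ltac:(lra)) as K. fold N in K.
    eapply Rle_trans; [exact H|].
    replace (- (s - 1)) with (- a + (a - s + 1)) by ring. rewrite Rpower_plus.
    replace (Rpower 2 s * (1 + / (a - s + 1)) * (Rpower N (- a) * Rpower N (a - s + 1)))
      with (Rpower 2 s * Rpower N (- a) * ((1 + / (a - s + 1)) * Rpower N (a - s + 1)))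
      by ring.
    apply Rmult_le_compat_l; [apply Rmult_le_pos|]; lra.
  - rewrite Rmin_right, Rabs_left by lra.
    pose proof (power_sum_sub1_le_const (a - s) n ltac:(lra)) as K.
    assert (Hinv : 0 < / - (a - s + 1)) by (apply Rinv_0_lt_compat; lra).
    eapply Rle_trans; [exact H|].
    replace (Rpower 2 s * (1 + / - (a - s + 1)) * Rpower N (- a))
      with (Rpower 2 s * Rpower N (- a) * (1 + / - (a - s + 1))) by ring.
    apply Rmult_le_compat_l; [apply Rmult_le_pos|]; lra.
Qed.

Theorem lemma6 :
  (forall (a sigma delta : R) (t : nat),
     0 < sigma -> 0 <= delta -> delta < Rmin 1 sigma -> 0 < a -> a <= 1 ->
     Rpower (2 * (sigma - delta) / a) (1 / (1 - delta)) < INR t ->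
     Ssum a sigma delta t <= Aconst a sigma delta * Rpower (INR t) (- (sigma - delta)))
  /\
  (forall (a sigma : R) (t : nat),
     0 < sigma -> 0 < a -> a <= 1 -> a - sigma + 1 <> 0 -> (1 <= t)%nat ->
     Ssum a sigma 1 t <= Aconst1 a sigma * Rpower (INR t) (- Rmin (sigma - 1) a)).
Proof.
  split; [exact Ssum_le_Aconst | exact Ssum_delta1_le_Aconst1].
Qed.
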